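(* Assume hypotheses (A) and (B) and that $p_{ij}=p<1/(d-1)$ for all $i\ne j$ in $\{1,\dots,d\}$. Let $q=p/(1-(d-2)p)$ and, for $\gamma\in\mathbb{R}^d$ with all $\gamma_j>0$, $$\Sigma(\gamma_1,\dots,\gamma_d)=\sum_{j=1}^d\frac{\max_{1\le i\le d}\log(1+q\gamma_i)-\log(1+q\gamma_j)}{\log(1+\gamma_j)-\log(1+q\gamma_j)}.$$ Then $\gamma=(\gamma_1,\dots,\gamma_d)\in\Gamma$ if and only if $\gamma_i>0$ for all $i$ and $\Sigma(\gamma_1,\dots,\gamma_d)<1$.
   Context: Jackson network with $d$ queues: arrival rates $\lambda_i\ge0$, service rates $\mu_i>0$, routing matrix $P=(p_{ij})_{i,j=1}^d$ nonnegative with $p_{ii}=0$, $\sum_jp_{ij}\le1$, $p_{i0}=1-\sum_jp_{ij}$. Hypothesis (A): the jump-rate kernel on $\mathbb{Z}^d$ (jumps $+\epsilon^i$ at rate $\lambda_i$, $-\epsilon^i$ at rate $\mu_ip_{i0}$, $\epsilon^j-\epsilon^i$ at rate $\mu_ip_{ij}$) is irreducible (equivalently spectral radius of $P$ $<1$ and for every $i$ some $\lambda_jp^{(n)}_{ji}>0$); then the traffic equations $\nu_j=\lambda_j+\sum_i\nu_ip_{ij}$ have a unique solution with $\nu_i>0$. Hypothesis (B): $\nu_i<\mu_i$ for all $i$. $Q_{ij}$: probability that the chain on $\{0,\dots,d\}$ with transitions $p_{ij}$ ($0$ absorbing) started at $i$ ever visits $j$ (time $0$ included); in the present setting $Q_{ij}=q$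 for $i\ne j$. For $\gamma\in\mathbb{R}_+^d$, $\overrightarrow{\gamma_i}$ has components $\gamma_i^j=\log(1+Q_{ji}\gamma_i)$; $\Gamma$ is the set of $\gamma\in\mathbb{R}_+^d$ such that for every $i$ and nonzero $v\in\mathbb{R}_+^d$ with $v^i=0$, $\overrightarrow{\gamma_i}\cdot v<\max_j\overrightarrow{\gamma_j}\cdot v$. *)

From HB Require Import structures.
From mathcomp Require Import all_boot all_order all_algebra.
From mathcomp Require Import all_classical all_reals all_analysis.
Set Implicit Arguments. Unset Strict Implicit. Unset Printing Implicit Defensive.
Import Order.TTheory GRing.Theory Num.Theory.
Import numFieldNormedType.Exports.
Local Open Scope ring_scope.

Section Jackson.
Variables (R : realType) (d : nat).

(* p_{i0} = 1 - sum_j p_{ij} : probability of leaving the network from i *)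
Definition exit_prob (P : 'M[R]_d) (i : 'I_d) : R := 1 - \sum_(j < d) P i j.

Definition routing_matrix (P : 'M[R]_d) : Prop :=
  (forall i j, 0 <= P i j) /\ (forall i, P i i = 0) /\
  (forall i, \sum_(j < d) P i j <= 1).

Definition unitv (i : 'I_d) : 'rV[int]_d := delta_mx 0 i.

(* v is an increment with positive jump rate for the kernel of hypothesis (A):
   +e^i at rate lambda_i, -e^i at rate mu_i p_{i0},
   e^j - e^i at rate mu_i p_{ij}. *)
Definition pos_rate_jump (lam mu : 'I_d -> R) (P : 'M[R]_d) (v : 'rV[int]_d)
  : Prop :=
  (exists i, v = unitv i /\ 0 < lam i) \/
  (exists i, v = - unitv i /\ 0 < mu i * exit_prob P i) \/
  (exists i j, i != j /\ v = unitv j - unitv i /\ 0 < mu i * P i j).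

(* Hypothesis (A): the jump kernel on Z^d is irreducible: from any x one can
   reach any y through finitely many jumps of positive rate. *)
Definition hypA (lam mu : 'I_d -> R) (P : 'M[R]_d) : Prop :=
  forall x y : 'rV[int]_d, exists s : seq 'rV[int]_d,
    {in s, forall v, pos_rate_jump lam mu P v} /\ y = x + \sum_(v <- s) v.

Definition traffic (lam : 'I_d -> R) (P : 'M[R]_d) (nu : 'I_d -> R) : Prop :=
  forall j, nu j = lam j + \sum_(i < d) nu i * P i j.

(* Hypothesis (B): the (unique, under (A)) solution nu of the traffic
   equations satisfies nu_i < mu_i. *)
Definition hypB (lam mu : 'I_d -> R) (P : 'M[R]_d) : Prop :=
  exists nu, traffic lam P nu /\ forall i, nu i < mu i.

(* hit_within P n i j = probability that the chain on {0,...,d} with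
   transitions p_{ij} (0 absorbing) started at i visits j at some time
   in {0,...,n}. *)
Fixpoint hit_within (P : 'M[R]_d) (n : nat) (i j : 'I_d) : R :=
  if i == j then 1 else
  match n with
  | 0 => 0
  | n'.+1 => \sum_(k < d) P i k * hit_within P n' k j
  end.

(* Q_{ij}: probability to ever visit j starting from i (time 0 included),
   the limit of the nondecreasing sequence hit_within P n i j. *)
Definition Qhit (P : 'M[R]_d) (i j : 'I_d) : R :=
  limn (fun n => hit_within P n i j).

Definition gvec (P : 'M[R]_d) (gamma : 'I_d -> R) (i : 'I_d) : 'I_d -> R :=
  fun j => ln (1 + Qhit P j i * gamma i).

Definition dotR (u v : 'I_d -> R) : R := \sum_(k < d) u k * v k.

Definition GammaSet (P : 'M[R]_d) (gamma : 'I_d -> R) : Prop :=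
  (forall k, 0 <= gamma k) /\
  forall (i : 'I_d) (v : 'I_d -> R),
    (forall k, 0 <= v k) -> (exists k, v k != 0) -> v i = 0 ->
    dotR (gvec P gamma i) v < \big[Num.max/0]_(j < d) dotR (gvec P gamma j) v.

Definition SigmaF (q : R) (gamma : 'I_d -> R) : R :=
  \sum_(j < d)
    ((\big[Num.max/0]_(i < d) ln (1 + q * gamma i)) - ln (1 + q * gamma j)) /
    (ln (1 + gamma j) - ln (1 + q * gamma j)).

End Jackson.

(** For the uniform routing matrix the hitting probabilities are explicit:
    Q_ii = 1 and Q_ij = q, since the time to hit j from i <> j is geometric
    (hit with probability p, continue with probability (d-2)p).  With
    b_j = log(1 + q g_j), c_j = log(1 + g_j) - b_j and s = sum_k v_k, the
    entries of the maximum defining Gamma are then the affine forms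
    b_j s + c_j v_j.  If all c_j > 0 and some nonzero v >= 0 with v_i = 0
    keeps them all below b_i s <= (max b) s, then v_j <= s (max b - b_j) / c_j,
    and summing over j gives Sigma >= 1; conversely, when Sigma >= 1 the vector
    v_j = (max b - b_j) / c_j, with i a maximiser of b, is such a v.  A
    vanishing g_k makes b_k = c_k = 0, and the k-th unit vector is then such
    a v. *)
From HB Require Import structures.
From mathcomp Require Import all_boot all_order all_algebra.
From mathcomp Require Import all_classical all_reals all_analysis.
From mathcomp Require Import ring lra.
Set Implicit Arguments. Unset Strict Implicit. Unset Printing Implicit Defensive.
Import Order.TTheory GRing.Theory Num.Theory.
Import numFieldNormedType.Exports.
Local Open Scope classical_set_scope.
Local Open Scope ring_scope.

Section UniformRouting.
Variables (R : realType) (d : nat) (P : 'M[R]_d) (p : R).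
Hypothesis d_ge2 : (2 <= d)%N.
Hypothesis P_diag : forall i, P i i = 0.
Hypothesis P_offdiag : forall i j, i != j -> P i j = p.

Let r := (d - 2)%:R * p.
Let q := p / (1 - r).

Lemma routing_row_sum i : \sum_(k < d) P i k = (d - 1)%:R * p.
Proof.
rewrite (bigD1 i) //= P_diag add0r.
under eq_bigr => k ki do rewrite P_offdiag 1?eq_sym //.
by rewrite sumr_const cardC1 card_ord mulr_natl subn1.
Qed.

Lemma sum_routing_hit i j (h : R) : i != j ->
  \sum_(k < d) P i k * (if k == j then 1 else h) = p + r * h.
Proof.
move=> ij; have row := routing_row_sum i.
rewrite (bigD1 j) //= eqxx mulr1 P_offdiag //.
under eq_bigr => k kj do rewrite (negbTE kj).
rewrite -mulr_suml; move: row; rewrite (bigD1 j) //= P_offdiag // => row.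
have -> : \sum_(k < d | k != j) P i k = (d - 1)%:R * p - p by rewrite -row addrAC subrr add0r.
rewrite /r !natrB ?(ltnW d_ge2) //; ring.
Qed.

Lemma hit_within_uniform n i j : r != 1 ->
  hit_within P n i j = if i == j then 1 else q - q * r ^+ n.
Proof.
move=> r_neq1; elim: n i => [|n IH] i /=.
  by case: ifP => //; rewrite expr0 mulr1 subrr.
case: (eqVneq i j) => // ij.
under eq_bigr do rewrite IH.
have r1_neq0 : 1 - r != 0 by rewrite subr_eq0 eq_sym.
by rewrite sum_routing_hit // /q exprS; field.
Qed.

Lemma Qhit_uniform i j : `|r| < 1 -> Qhit P i j = if i == j then 1 else q.
Proof.
move=> r_lt1; have r_neq1 : r != 1 by apply: contraTneq r_lt1 => ->; rewrite normr1 ltxx.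
rewrite /Qhit; under eq_fun do rewrite hit_within_uniform //.
case: (eqVneq i j) => _; apply: cvg_lim => //; first exact: cvg_cst.
rewrite -[X in _ --> X]subr0 -[X in _ - X](mulr0 q).
by apply: cvgB; [exact: cvg_cst | apply: cvgM; [exact: cvg_cst | exact: cvg_expr]].
Qed.

End UniformRouting.

Lemma exists_ord_neq (d : nat) (k : 'I_d) : (1 < d)%N -> exists i : 'I_d, i != k.
Proof.
move=> d_gt1; pose i0 : 'I_d := Ordinal (ltnW d_gt1); pose i1 : 'I_d := Ordinal d_gt1.
case: (eqVneq k i0) => [->|k_neq]; first by exists i1.
by exists i0; rewrite eq_sym.
Qed.

Section AffineMax.
Variables (R : realType) (d : nat) (b c : 'I_d -> R).
Hypothesis b_ge0 : forall j, 0 <= b j.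

Let B := \big[Num.max/0]_(j < d) b j.

Definition affine_separating : Prop :=
  forall i (v : 'I_d -> R), (forall k, 0 <= v k) -> (exists k, v k != 0) ->
    v i = 0 ->
    b i * \sum_(k < d) v k <
      \big[Num.max/0]_(j < d) (b j * \sum_(k < d) v k + c j * v j).

Definition slack_sum : R := \sum_(j < d) (B - b j) / c j.

Lemma le_bigmax_affine j : b j <= B.
Proof. exact: le_bigmax. Qed.

Lemma bigmax_affine_attained : (0 < d)%N -> exists i, b i = B.
Proof.
move=> d_gt0; have [i _ biB] := eq_bigmax (Ordinal d_gt0) predT b isT (fun j _ => b_ge0 j).
by exists i.
Qed.

Lemma affine_separating_slack : (forall j, 0 < c j) -> slack_sum < 1 ->
  affine_separating.
Proof.
move=> c_gt0 slack_lt1 i v v_ge0 [k vk_neq0] _.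
set S := \sum_(k < d) v k.
have S_gt0 : 0 < S.
  rewrite lt_neqAle sumr_ge0 // andbT eq_sym; apply: contra vk_neq0 => /eqP S0.
  by apply/eqP; apply: (psumr_eq0P _ S0).
rewrite ltNge; apply/negP => max_le.
have v_le j : v j <= (B - b j) / c j * S.
  have := le_trans (le_bigmax _ _ j) max_le => /= le_j.
  have := ler_wpM2r (ltW S_gt0) (le_bigmax_affine i).
  rewrite mulrAC ler_pdivlMr //; nra.
have : S <= slack_sum * S by rewrite /slack_sum mulr_suml; exact: ler_sum.
nra.
Qed.

Lemma slack_not_affine_separating : (0 < d)%N -> (forall j, 0 < c j) ->
  1 <= slack_sum -> ~ affine_separating.
Proof.
move=> d_gt0 c_gt0 slack_ge1 sep.
have [i biB] := bigmax_affine_attained d_gt0.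
pose v j := (B - b j) / c j.
have v_ge0 j : 0 <= v j by rewrite divr_ge0 ?subr_ge0 ?le_bigmax_affine ?ltW.
have S_ge1 : 1 <= \sum_(k < d) v k by [].
have v_neq0 : exists k, v k != 0.
  apply/existsP; apply: contraTT slack_ge1 => /existsPn v0.
  by rewrite -ltNge /slack_sum big1 ?ltr01 // => k _; apply/eqP/negPn/v0.
have vi0 : v i = 0 by rewrite /v biB subrr mul0r.
have := sep i v v_ge0 v_neq0 vi0; apply/negP; rewrite -leNgt; apply: bigmax_le => [|j _].
  exact: mulr_ge0 (b_ge0 i) (le_trans ler01 S_ge1).
have -> : c j * v j = B - b j by rewrite mulrC divfK ?gt_eqF.
have := le_bigmax_affine j; rewrite biB; nra.
Qed.

Lemma degenerate_not_affine_separating k : (1 < d)%N -> b k = 0 -> c k = 0 ->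
  ~ affine_separating.
Proof.
move=> d_gt1 bk0 ck0 sep.
have [i ik b_le] : exists2 i, i != k & forall j, b j <= b i.
  have [i0 bi0] := bigmax_affine_attained (ltnW d_gt1).
  have le_i0 j : b j <= b i0 by rewrite bi0 le_bigmax_affine.
  case: (eqVneq i0 k) => [ei0|]; last by exists i0.
  have [i ik] := exists_ord_neq k d_gt1.
  by exists i => // j; rewrite (le_trans (le_i0 j)) // ei0 bk0.
pose v (l : 'I_d) : R := (l == k)%:R.
have S1 : \sum_(l < d) v l = 1.
  by rewrite (bigD1 k) //= big1 ?addr0 /v ?eqxx // => l /negbTE ->.
have v_neq0 : exists l, v l != 0 by exists k; rewrite /v eqxx oner_neq0.
have vi0 : v i = 0 by rewrite /v (negbTE ik).
have := sep i v (fun l => ler0n _ _) v_neq0 vi0; rewrite S1 mulr1.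
apply/negP; rewrite -leNgt; apply: bigmax_le => [|j _]; first exact: b_ge0.
case: (eqVneq j k) => [->|jk]; rewrite /v ?eqxx ?(negbTE jk) mulr1.
  by rewrite ck0 bk0 mul0r addr0.
by rewrite mulr0 addr0.
Qed.

Lemma affine_separatingE : (1 < d)%N -> (forall k, 0 <= c k) ->
  (forall k, c k = 0 -> b k = 0) ->
  affine_separating <-> (forall j, 0 < c j) /\ slack_sum < 1.
Proof.
move=> d_gt1 c_ge0 c0_b0; split => [sep|[c_gt0]]; last exact: affine_separating_slack.
have c_gt0 j : 0 < c j.
  rewrite lt_neqAle c_ge0 andbT eq_sym; apply/eqP => cj0.
  exact: (degenerate_not_affine_separating d_gt1 (c0_b0 j cj0) cj0).
split=> //; rewrite ltNge; apply/negP => slack_ge1.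
exact: (slack_not_affine_separating (ltnW d_gt1) c_gt0 slack_ge1).
Qed.

End AffineMax.

Lemma uniform_routing_bounds (R : realType) (d : nat) (p : R) :
  (2 <= d)%N -> 0 <= p -> p < ((d - 1)%:R)^-1 ->
  let r := (d - 2)%:R * p in
  [/\ 0 <= r, r < 1, 0 <= p / (1 - r) & p / (1 - r) < 1].
Proof.
move=> d_ge2 p_ge0 p_lt r.
have d1 : (d - 1)%:R = (d - 2)%:R + 1 :> R by rewrite !natrB ?(ltnW d_ge2) //; ring.
have d2_ge0 : 0 <= (d - 2)%:R :> R by [].
have dp_lt1 : p * (d - 1)%:R < 1.
  by rewrite -ltr_pdivlMr ?mul1r // ltr0n subn_gt0.
rewrite d1 in dp_lt1.
have r_lt1 : r < 1 by rewrite /r; nra.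
have r_ge0 : 0 <= r by exact: mulr_ge0.
have r1_gt0 : 0 < 1 - r by rewrite subr_gt0.
split=> //; first by rewrite divr_ge0 // ltW.
by rewrite ltr_pdivrMr // mul1r /r; nra.
Qed.

Lemma dotR_gvec_uniform (R : realType) (d : nat) (P : 'M[R]_d) (q : R)
    (g v : 'I_d -> R) j :
  (forall k, Qhit P k j = if k == j then 1 else q) ->
  dotR (gvec P g j) v = ln (1 + q * g j) * \sum_(k < d) v k +
    (ln (1 + g j) - ln (1 + q * g j)) * v j.
Proof.
move=> hQ; rewrite /dotR /gvec mulr_sumr.
have split_k k : ln (1 + Qhit P k j * g j) * v k = ln (1 + q * g j) * v k +
    (if k == j then (ln (1 + g j) - ln (1 + q * g j)) * v j else 0).
  by rewrite hQ; case: (eqVneq k j) => [->|_]; [rewrite mul1r; ring | rewrite addr0].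
by rewrite (eq_bigr _ (fun k _ => split_k k)) big_split /= -big_mkcond big_pred1_eq.
Qed.

Lemma GammaSet_affine_separating (R : realType) (d : nat) (P : 'M[R]_d) (q : R)
    (g : 'I_d -> R) :
  (forall k j, Qhit P k j = if k == j then 1 else q) ->
  GammaSet P g <-> (forall k, 0 <= g k) /\
    affine_separating (fun j => ln (1 + q * g j))
                      (fun j => ln (1 + g j) - ln (1 + q * g j)).
Proof.
move=> hQ; have dotE := fun j v => dotR_gvec_uniform g v (hQ^~ j).
have key i v : v i = 0 ->
    (dotR (gvec P g i) v < \big[Num.max/0]_(j < d) dotR (gvec P g j) v) =
    (ln (1 + q * g i) * \sum_(k < d) v k < \big[Num.max/0]_(j < d)
       (ln (1 + q * g j) * \sum_(k < d) v k +
        (ln (1 + g j) - ln (1 + q * g j)) * v j)).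
  by move=> vi; rewrite dotE vi mulr0 addr0; congr (_ < _); apply: eq_bigr.
by split=> -[g_ge0 sep]; split=> // i v v_ge0 v_neq0 vi;
  [rewrite -key | rewrite key] => //; exact: sep.
Qed.

Lemma ln_gap_gt0 (R : realType) (q x : R) : 0 <= q -> q < 1 -> 0 <= x ->
  (0 < ln (1 + x) - ln (1 + q * x)) = (0 < x).
Proof.
move=> q_ge0 q_lt1; rewrite le_eqVlt => /orP[/eqP <-|x_gt0].
  by rewrite mulr0 subrr ltxx.
rewrite x_gt0 subr_gt0 ltr_ln ?posrE; nra.
Qed.

Lemma log_affine_separatingE (R : realType) (d : nat) (q : R) (g : 'I_d -> R) :
  (1 < d)%N -> 0 <= q -> q < 1 -> (forall k, 0 <= g k) ->
  affine_separating (fun j => ln (1 + q * g j))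
                    (fun j => ln (1 + g j) - ln (1 + q * g j)) <->
  (forall j, 0 < g j) /\ SigmaF q g < 1.
Proof.
move=> d_gt1 q_ge0 q_lt1 g_ge0; have gap_gt0 j := ln_gap_gt0 q_ge0 q_lt1 (g_ge0 j).
rewrite affine_separatingE //.
- by split=> -[gap_pos Sigma_lt1]; split=> // j; [rewrite -gap_gt0 | rewrite gap_gt0].
- by move=> j; rewrite ln_ge0 // lerDl mulr_ge0.
- move=> k; have := g_ge0 k; rewrite le_eqVlt => /orP[/eqP <-|].
    by rewrite mulr0 subrr.
  by rewrite -gap_gt0 => /ltW.
- move=> k gap0; suff -> : g k = 0 by rewrite mulr0 addr0 ln1.
  by apply/eqP; rewrite eq_le g_ge0 andbT leNgt -gap_gt0 gap0 ltxx.
Qed.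

Theorem proposition3p3 (R : realType) (d : nat) (lam mu : 'I_d -> R)
  (P : 'M[R]_d) (p : R) :
  (2 <= d)%N ->
  (forall i, 0 <= lam i) -> (forall i, 0 < mu i) ->
  routing_matrix P ->
  hypA lam mu P -> hypB lam mu P ->
  (forall i j : 'I_d, i != j -> P i j = p) ->
  p < ((d - 1)%:R)^-1 ->
  let q := p / (1 - (d - 2)%:R * p) in
  forall gamma : 'I_d -> R,
    GammaSet P gamma <-> ((forall i, 0 < gamma i) /\ SigmaF q gamma < 1).
Proof.
move=> d_ge2 _ _ [P_ge0 [P_diag _]] _ _ P_offdiag p_lt q g.
have [i0 i0_neq] := exists_ord_neq (Ordinal d_ge2) d_ge2.
have p_ge0 : 0 <= p by rewrite -(P_offdiag _ _ i0_neq).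
have [r_ge0 r_lt1 q_ge0 q_lt1] := uniform_routing_bounds d_ge2 p_ge0 p_lt.
have hQ k j : Qhit P k j = if k == j then 1 else q.
  by apply: Qhit_uniform; rewrite ?ger0_norm.
rewrite (GammaSet_affine_separating _ hQ).
have sepE g_ge0 := log_affine_separatingE d_ge2 q_ge0 q_lt1 g_ge0.
split=> [[g_ge0 /sepE] | [g_gt0 Sigma_lt1]]; first exact.
have g_ge0 k : 0 <= g k by exact/ltW.
by split=> //; apply/sepE.
Qed.
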